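(* Let $G=\{G_n\}_{n\in\mathbb{Z}}$ be a sequence with values in $\mathbb{D}$ and $G_n=0$ for $n<n_0$ (some $n_0\in\mathbb{Z}$). Suppose that for fixed $m\in\mathbb{Z}$ and $p\in\mathbb{N}$ one has $\sum_{s=m+1}^{m+p}|G_s|\leqslant\frac12$. Then there is an absolute constant $C$ such that for all $z\in\mathbb{T}$, $$|\mathfrak{r}(z,G^{\leqslant m+p})-\mathfrak{r}(z,G^{\leqslant m})|\leqslant C\sum_{s=m+1}^{m+p}|G_s|.$$
   Context: $\mathbb{T}$, $\mathbb{D}$ denote the unit circle and open unit disc. $G^{\leqslant M}=G\chi_{n\leqslant M}$ (finitely supported here). For a finitely supported $H$ with values in $\mathbb{D}$: $\widetilde X_n(z)=I$ below the support, $\widetilde X_n=(1-|H_n|^2)^{-1/2}\begin{pmatrix}1&\overline{H_n}z^{-n}\\ H_nz^n&1\end{pmatrix}\widetilde X_{n-1}$, and above the support $\widetilde X_n=\begin{pmatrix}\mathfrak{a}(z,H)&\mathfrak{b}^{( * )}(z,H)\\ \mathfrak{b}(z,H)&\mathfrak{a}^{( * )}(z,H)\end{pmatrix}$ with $f^{( * )}(z)=\overline{f(\bar z^{-1})}$; $\mathfrak{r}(z,H)=\mathfrak{b}(z,H)/\mathfrak{a}^{( * )}(z,H)$. *)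

From HB Require Import structures.
From mathcomp Require Import all_boot all_order all_algebra.
From mathcomp Require Import complex.
From mathcomp Require Import reals.
Set Implicit Arguments. Unset Strict Implicit. Unset Printing Implicit Defensive.
Import Order.TTheory GRing.Theory Num.Theory.
Local Open Scope ring_scope.

Section Defs.
Variable R : realType.
Local Notation C := R[i].

Definition trunc (G : int -> C) (M : int) : int -> C :=
  fun n => if n <= M then G n else 0.

Definition step (H : int -> C) (z : C) (n : int) : 'M[C]_2 :=
  (sqrtC (1 - `|H n| ^+ 2))^-1 *:
  \matrix_(i < 2, j < 2)
     (if i == j then 1
      else if (i : nat) == 0%N then (H n)^* * z ^ (- n)
      else H n * z ^ n).

(* Xt H lo k = X_{lo+k-1} when X_{lo-1} = I, i.e. the product
   A_{lo+k-1} ... A_{lo+1} A_lo. *)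
Fixpoint Xt (H : int -> C) (z : C) (lo : int) (k : nat) : 'M[C]_2 :=
  match k with
  | 0%N => 1%:M
  | k'.+1 => step H z (lo + k'%:Z) *m Xt H z lo k'
  end.

(* X~_n "above the support": for H supported in [lo, hi], this is X~_hi
   computed from X~_{lo-1} = I (the identity if hi < lo). *)
Definition Xabove (H : int -> C) (z : C) (lo hi : int) : 'M[C]_2 :=
  Xt H z lo (if hi < lo then 0%N else absz (hi - lo + 1)).

Definition fa H z lo hi := Xabove H z lo hi 0 0.
Definition fb H z lo hi := Xabove H z lo hi 1 0.
Definition fastar H z lo hi := Xabove H z lo hi 1 1.

Definition fr (H : int -> C) (z : C) (lo hi : int) : C :=
  fb H z lo hi / fastar H z lo hi.

End Defs.

(* Above the support, the transfer matrix of a sequence with values in the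
   disc is a product of one-step matrices lying in SU(1,1), i.e. of the form
   [[a, b^*], [b, a^*]] with |a|^2 - |b|^2 = 1, and the reflection coefficient
   is r = b / a^*.  Truncating at m + p instead of m multiplies the transfer
   matrix X on the left by the product Y of the p steps m+1, ..., m+p, and
   r(Y X) - r(X) = b_Y / (a_X^* (Y X)_{11}), whose denominator is at least
   1 / (|a_Y| + |b_Y|) in modulus.  The quantity |a| + |b| (the operator norm
   on SU(1,1)) is submultiplicative and at most 1 / (1 - |H_n|) for one step,
   so for Y it is at most 1 / (1 - S) <= 2 with S = sum |G_s| <= 1/2; the
   identity |a|^2 - |b|^2 = 1 then forces |b_Y| (|a_Y| + |b_Y|) <= 4 S. *)
From HB Require Import structures.
From mathcomp Require Import all_boot all_order all_algebra.
From mathcomp Require Import complex reals.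
From mathcomp Require Import zify ring lra.
Import Order.TTheory GRing.Theory Num.Theory.
Local Open Scope ring_scope.

Set Implicit Arguments. Unset Strict Implicit. Unset Printing Implicit Defensive.

(* Moduli are taken in R, which unlike R[i] is totally ordered, so that lra and
   nra apply to the estimates. *)
Local Notation normc := Normc.normc.

Section ComplexNorm.
Variable R : rcfType.
Implicit Types x y : R[i].

Lemma normcE x : `|x| = (normc x)%:C%C.
Proof. by case: x. Qed.

Lemma normc_ge0 x : 0 <= normc x.
Proof. by rewrite -ler0c -normcE. Qed.

Lemma normc_eq0 x : (normc x == 0) = (x == 0).
Proof. by rewrite -[x == 0]normr_eq0 normcE (inj_eq (@complexI _)). Qed.

Lemma normc_gt0 x : (0 < normc x) = (x != 0).
Proof. by rewrite lt_def normc_eq0 normc_ge0 andbT. Qed.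

Lemma normc_conj x : normc x^* = normc x.
Proof. by apply: (@complexI R); rewrite -!normcE normcJ. Qed.

Lemma sqr_normcE x : (normc x ^+ 2)%:C%C = x * x^*.
Proof. by rewrite -sqr_normc normcE rmorphXn. Qed.

Lemma lerB_normcD x y : normc x - normc y <= normc (x + y).
Proof. exact: (@lerB_normD _ (Rcomplex R)). Qed.

Lemma sum_normcE (I : Type) (r : seq I) (P : pred I) (f : I -> R[i]) :
  \sum_(i <- r | P i) `|f i| = (\sum_(i <- r | P i) normc (f i))%:C%C.
Proof. by rewrite rmorph_sum; apply: eq_bigr => i _; rewrite normcE. Qed.

End ComplexNorm.

Lemma mulmx2E (S : pzSemiRingType) (X Y : 'M[S]_2) i j :
  (X *m Y) i j = X i 0 * Y 0 j + X i 1 * Y 1 j.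
Proof.
rewrite mxE big_ord_recl big_ord1.
by have -> : lift ord0 ord0 = 1 :> 'I_2 by apply/val_inj.
Qed.

Definition refl (F : fieldType) (X : 'M[F]_2) : F := X 1 0 / X 1 1.

Lemma refl_mul_sub (F : fieldType) (X Y : 'M[F]_2) :
  X 1 1 != 0 -> (Y *m X) 1 1 != 0 ->
  refl (Y *m X) - refl X =
    Y 1 0 * (X 0 0 * X 1 1 - X 0 1 * X 1 0) / (X 1 1 * (Y *m X) 1 1).
Proof. by rewrite /refl !mulmx2E => X11 YX11; field; rewrite X11 YX11. Qed.

Section SU11.
Variable R : rcfType.
Local Notation C := R[i].
Implicit Types X Y : 'M[C]_2.

Definition su11 X := [/\ X 1 1 = (X 0 0)^*, X 0 1 = (X 1 0)^*
  & X 0 0 * (X 0 0)^* - X 1 0 * (X 1 0)^* = 1].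

Lemma su11_1 : su11 1%:M.
Proof. by split; rewrite !mxE /= ?conjC1 ?conjC0 // mulr0 subr0 mulr1. Qed.

Lemma su11_mul X Y : su11 X -> su11 Y -> su11 (X *m Y).
Proof.
case=> X11 X01 detX [Y11 Y01 detY].
rewrite /su11 !mulmx2E X11 X01 Y11 Y01 !rmorphD !rmorphM /= !conjCK.
split; [ring | ring | rewrite -[RHS](mulr1 1) -{1}detX -detY; ring].
Qed.

Lemma su11_normc X : su11 X -> normc (X 0 0) ^+ 2 - normc (X 1 0) ^+ 2 = 1.
Proof. by case=> _ _ detX; apply: (@complexI R); rewrite rmorphB /= !sqr_normcE. Qed.

(* The singular values of an SU(1,1) matrix are |a| + |b| and |a| - |b|:
   this is its operator norm. *)
Definition su11_norm X : R := normc (X 0 0) + normc (X 1 0).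

Lemma su11_norm1 : su11_norm 1%:M = 1.
Proof.
by rewrite /su11_norm !mxE -[1 == 0 :> 'I_2]/false eqxx Normc.normc1 Normc.normc0 addr0.
Qed.

Lemma su11_norm_ge1 X : su11 X -> 1 <= su11_norm X.
Proof.
move=> /su11_normc; rewrite /su11_norm.
by have := normc_ge0 (X 0 0); have := normc_ge0 (X 1 0); nra.
Qed.

Lemma su11_norm_mul X Y : su11 X -> su11_norm (X *m Y) <= su11_norm X * su11_norm Y.
Proof.
case=> X11 X01 _; rewrite /su11_norm !mulmx2E X11 X01.
have := le_normcD (X 0 0 * Y 0 0) ((X 1 0)^* * Y 1 0).
have := le_normcD (X 1 0 * Y 0 0) ((X 0 0)^* * Y 1 0).
rewrite !Normc.normcM !normc_conj.
have := normc_ge0 (X 0 0); have := normc_ge0 (X 1 0).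
have := normc_ge0 (Y 0 0); have := normc_ge0 (Y 1 0).
nra.
Qed.

(* |(Y X)_11| >= (|a_Y| - |b_Y|) |a_X| because |b_X| <= |a_X|, and
   (|a_Y| - |b_Y|) (|a_Y| + |b_Y|) = 1 <= |a_X|^2. *)
Lemma su11_mul_corner X Y : su11 X -> su11 Y ->
  1 <= normc (X 1 1) * normc ((Y *m X) 1 1) * su11_norm Y.
Proof.
move=> sX sY; have nX := su11_normc sX; have nY := su11_normc sY.
case: sX => X11 X01 _; case: sY => Y11 _ _.
rewrite mulmx2E X11 X01 Y11 /su11_norm normc_conj.
have := lerB_normcD ((Y 0 0)^* * (X 0 0)^*) (Y 1 0 * (X 1 0)^*).
rewrite [_ + Y 1 0 * _]addrC !Normc.normcM !normc_conj.
have := normc_ge0 (X 0 0); have := normc_ge0 (X 1 0).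
have := normc_ge0 (Y 0 0); have := normc_ge0 (Y 1 0).
move: nX nY; set a := normc (X 0 0); set b := normc (X 1 0).
set al := normc (Y 0 0); set be := normc (Y 1 0); set d := normc (_ + _).
move=> nX nY be0 al0 b0 a0 hd.
have b_le : b <= a by nra.
have be_le : be <= al by nra.
have d_ge : (al - be) * a <= d by nra.
have e : (al - be) * (al + be) = 1 by rewrite -nY; ring.
have : a * ((al - be) * a) * (al + be) <= a * d * (al + be).
  by apply: ler_wpM2r; [lra | apply: ler_wpM2l].
have -> : a * ((al - be) * a) * (al + be) = a ^+ 2 by rewrite -[RHS]mul1r -e; ring.
nra.
Qed.

Lemma refl_su11_mul_sub X Y : su11 X -> su11 Y ->
  normc (refl (Y *m X) - refl X) <= normc (Y 1 0) * su11_norm Y.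
Proof.
move=> sX sY; have corner := su11_mul_corner sX sY.
have [X11 X01 _] := sX; have [_ _ detX] := sX.
have {}detX : X 0 0 * X 1 1 - X 0 1 * X 1 0 = 1.
  by rewrite X11 X01 [(X 1 0)^* * _]mulrC.
have nz u v : 1 <= normc u * normc v * su11_norm Y -> u != 0 /\ v != 0.
  by rewrite -!normc_eq0 => h; split; apply/eqP => e; move: h; rewrite e; lra.
have [X11n0 YX11n0] := nz _ _ corner.
rewrite refl_mul_sub // detX mulr1 Normc.normcM Normc.normcV Normc.normcM.
rewrite ler_pdivrMr; last by rewrite mulr_gt0 ?normc_gt0.
by have := normc_ge0 (Y 1 0); nra.
Qed.

(* With N = |a_Y| + |b_Y|, one has 2 |b_Y| N = N^2 - 1, and N <= 1 / (1 - S). *)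
Lemma su11_small Y (S : R) : su11 Y -> 0 <= S -> S <= 1 / 2 ->
  su11_norm Y * (1 - S) <= 1 -> normc (Y 1 0) * su11_norm Y <= 4 * S.
Proof.
move=> /su11_normc detY S0 S1; rewrite /su11_norm.
have := normc_ge0 (Y 0 0); have := normc_ge0 (Y 1 0).
move: detY; set A := normc (Y 0 0); set B := normc (Y 1 0) => detY B0 A0 hN.
have eBN : 2 * (B * (A + B)) = (A + B) ^+ 2 - 1 by rewrite -[in RHS]detY; ring.
have hN2 : (A + B) ^+ 2 * (1 - S) ^+ 2 <= 1.
  have : 0 <= (A + B) * (1 - S) by nra.
  nra.
have hS : 1 <= (1 + 8 * S) * (1 - S) ^+ 2 by nra.
nra.
Qed.

End SU11.
Section Transfer.
Variable R : realType.
Local Notation C := R[i].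
Implicit Types (G H : int -> C) (z : C) (n lo hi L M : int) (k j p : nat).

Section UnitCircle.
Variables (z : C) (n : int).
Hypothesis z1 : `|z| = 1.

Lemma conj_exprz_unit : (z ^ n)^* = z ^ (- n).
Proof.
have zV : z^* = z^-1 by rewrite invC_norm z1 expr1n invr1 mul1r.
by rewrite fmorphXz /= zV exprz_inv.
Qed.

Lemma mul_exprz_conj : z ^ n * (z ^ n)^* = 1.
Proof.
have zU : z \is a GRing.unit by rewrite unitfE -normr_eq0 z1 oner_eq0.
by rewrite conj_exprz_unit -invr_expz mulrV // unitrXz.
Qed.

Lemma normc_exprz_unit : normc (z ^ n) = 1.
Proof.
have : normc (z ^ n) ^+ 2 = 1.
  by apply: (@complexI R); rewrite sqr_normcE mul_exprz_conj.
by have := normc_ge0 (z ^ n); nra.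
Qed.

End UnitCircle.

Definition step_scale (h : C) : C := (sqrtC (1 - `|h| ^+ 2))^-1.

Section StepScale.
Variable h : C.
Hypothesis h1 : `|h| < 1.
Local Notation c := (step_scale h).

Lemma step_scale_ge0 : 0 <= c.
Proof. by rewrite /step_scale invr_ge0 sqrtC_ge0 subr_ge0 ltW // expr_lt1. Qed.

Lemma step_scale_conj : c^* = c.
Proof. exact/conj_Creal/ger0_real/step_scale_ge0. Qed.

Lemma step_scale_sqr : c ^+ 2 * (1 - `|h| ^+ 2) = 1.
Proof. by rewrite /step_scale exprVn sqrtCK mulVf // gt_eqF // subr_gt0 expr_lt1. Qed.

Lemma normc_step_scale_sqr : normc c ^+ 2 * (1 - normc h ^+ 2) = 1.
Proof.
apply: (@complexI R).
by rewrite rmorphM rmorphB rmorph1 !rmorphXn /= -!normcE ger0_norm ?step_scale_ge0 ?step_scale_sqr.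
Qed.

End StepScale.

Lemma step_entries H z n : let c := step_scale (H n) in
  [/\ step H z n 0 0 = c, step H z n 1 1 = c,
      step H z n 1 0 = c * (H n * z ^ n)
    & step H z n 0 1 = c * ((H n)^* * z ^ (- n))].
Proof. by rewrite /step !mxE /= !mulr1. Qed.

Lemma su11_step H z n : `|H n| < 1 -> `|z| = 1 -> su11 (step H z n).
Proof.
move=> h1 z1; rewrite /su11; have [-> -> -> ->] := step_entries H z n.
rewrite !rmorphM /= step_scale_conj // -conj_exprz_unit //; split=> //.
set c := step_scale _; set w := z ^ n.
have -> : c * c - c * (H n * w) * (c * ((H n)^* * w^*)) =
          c ^+ 2 * (1 - H n * (H n)^* * (w * w^*)) by ring.
by rewrite mul_exprz_conj // mulr1 -normCK step_scale_sqr.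
Qed.

Lemma su11_norm_step H z n : `|H n| < 1 -> `|z| = 1 ->
  su11_norm (step H z n) * (1 - normc (H n)) <= 1.
Proof.
move=> h1 z1; have [e00 _ e10 _] := step_entries H z n.
rewrite /su11_norm e00 e10 !Normc.normcM normc_exprz_unit // mulr1.
have := normc_step_scale_sqr h1; have := normc_ge0 (step_scale (H n)).
have : normc (H n) < 1 by rewrite -ltcR -normcE.
have := normc_ge0 (H n).
set c := normc _; set t := normc (H n) => t0 t1 c0 hc.
nra.
Qed.

Lemma step_eq1 H z n : H n = 0 -> step H z n = 1%:M.
Proof.
move=> h0; apply/matrixP => i j.
rewrite /step /step_scale !mxE h0 normr0 expr0n /= subr0 sqrtC1 invr1 mul1r.
by case: i j => [[|[|//]]] ? [[|[|//]]] ? //=; rewrite ?conjC0 ?mul0r.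
Qed.

Lemma Xt_add H z L k j : Xt H z L (k + j) = Xt H z (L + k%:Z) j *m Xt H z L k.
Proof.
elim: j => [|j IH]; first by rewrite addn0 mul1mx.
by rewrite addnS /= IH mulmxA PoszD addrA.
Qed.

Lemma eq_Xt H1 H2 z L k :
    (forall s, (s < k)%N -> H1 (L + s%:Z) = H2 (L + s%:Z)) ->
  Xt H1 z L k = Xt H2 z L k.
Proof.
elim: k => [//|k IH] eqH /=.
by rewrite IH => [|s /ltnW/eqH //]; rewrite /step eqH.
Qed.

Lemma Xt_eq1 H z L k : (forall s, (s < k)%N -> H (L + s%:Z) = 0) -> Xt H z L k = 1%:M.
Proof.
move=> H0; rewrite (@eq_Xt H (fun=> 0)) => [|s /H0 //].
by elim: k {H0} => [//|k /= ->]; rewrite step_eq1 ?mulmx1.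
Qed.

Lemma su11_Xt H z L k : (forall n, `|H n| < 1) -> `|z| = 1 -> su11 (Xt H z L k).
Proof.
move=> H1 z1; elim: k => [|k IH]; first exact: su11_1.
exact: su11_mul (su11_step (H1 _) z1) IH.
Qed.

Lemma su11_norm_Xt H z L k : (forall n, `|H n| < 1) -> `|z| = 1 ->
  \sum_(s < k) normc (H (L + s%:Z)) <= 1 ->
  su11_norm (Xt H z L k) * (1 - \sum_(s < k) normc (H (L + s%:Z))) <= 1.
Proof.
move=> H1 z1; elim: k => [|k IH].
  by rewrite big_ord0 subr0 mulr1 su11_norm1.
rewrite big_ord_recr /= => St.
set S := \sum_(s < k) _ in IH St *; set t := normc (H (L + k%:Z)) in St *.
have S0 : 0 <= S by rewrite sumr_ge0 // => s _; exact: normc_ge0.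
have t0 : 0 <= t := normc_ge0 _.
have := su11_norm_mul (Xt H z L k) (su11_step (H1 (L + k%:Z)) z1).
have := su11_norm_step (H1 (L + k%:Z)) z1; rewrite -/t.
have := IH ltac:(lra).
have := su11_norm_ge1 (su11_step (H1 (L + k%:Z)) z1).
have := su11_norm_ge1 (su11_Xt L k H1 z1).
set a := su11_norm (step _ _ _); set F := su11_norm (Xt _ _ _ _); set F' := su11_norm _.
move=> F1 a1 FS aS F'aF.
have : F' * (1 - (S + t)) <= a * F * (1 - (S + t)) by apply: ler_wpM2r; lra.
have : a * F * (1 - (S + t)) <= (a * (1 - t)) * (F * (1 - S)) by nra.
have : (a * (1 - t)) * (F * (1 - S)) <= 1 by apply: mulr_ile1; nra.
lra.
Qed.

Lemma Xabove_Xt H z lo hi L : (forall n, n < lo -> H n = 0) ->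
  L <= lo -> L <= hi + 1 -> Xabove H z lo hi = Xt H z L (absz (hi + 1 - L)%R).
Proof.
move=> H0 Llo Lhi; rewrite /Xabove; case: ifP => hilo.
  by rewrite [RHS]Xt_eq1 // => s s_lt; apply: H0; lia.
have -> : absz (hi + 1 - L)%R = (absz (lo - L)%R + absz (hi - lo + 1)%R)%N by lia.
rewrite Xt_add (_ : L + _ = lo); last by lia.
by rewrite [Xt H z L _]Xt_eq1 ?mulmx1 // => s s_lt; apply: H0; lia.
Qed.

Lemma fr_trunc G z lo M L : (forall n, n < lo -> G n = 0) ->
  L <= lo -> L <= M + 1 -> fr (trunc G M) z lo M = refl (Xt G z L (absz (M + 1 - L)%R)).
Proof.
move=> G0 Llo LM; rewrite /fr /fb /fastar (@Xabove_Xt _ _ _ _ L) //; last first.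
  by move=> n n_lt; rewrite /trunc G0 // if_same.
by rewrite (@eq_Xt _ G) // => s s_lt; rewrite /trunc ifT //; lia.
Qed.

Lemma refl_Xt_mul_sub H z L p X : (forall n, `|H n| < 1) -> `|z| = 1 -> su11 X ->
  \sum_(s < p) normc (H (L + s%:Z)) <= 1 / 2 ->
  normc (refl (Xt H z L p *m X) - refl X) <= 4 * \sum_(s < p) normc (H (L + s%:Z)).
Proof.
move=> H1 z1 sX small; have sY := su11_Xt L p H1 z1.
apply: le_trans (refl_su11_mul_sub sX sY) _; apply: su11_small => //.
- by rewrite sumr_ge0 // => s _; exact: normc_ge0.
- by apply: su11_norm_Xt => //; lra.
Qed.

End Transfer.

Local Open Scope complex_scope.

Theorem lemma4p3 (R : realType) :
  exists K : R,
  forall (G : int -> R[i]) (n0 m : int) (p : nat),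
    (forall n, `|G n| < 1) ->
    (forall n, n < n0 -> G n = 0) ->
    \sum_(s < p) `|G (m + s.+1%:Z)| <= 1 / 2 ->
    forall z : R[i], `|z| = 1 ->
      `|fr (trunc G (m + p%:Z)) z n0 (m + p%:Z) - fr (trunc G m) z n0 m|
        <= K%:C * \sum_(s < p) `|G (m + s.+1%:Z)|.
Proof.
exists 4 => G n0 m p G1 G0 small z z1.
have [L Ln0 Lm] : {L : int | L <= n0 & L <= m + 1}.
  by exists (Num.min n0 (m + 1)); rewrite ge_min lexx ?orbT.
have [k Lk] : {k : nat | L + k%:Z = m + 1} by exists (absz (m + 1 - L)%R); lia.
have -> : fr (trunc G m) z n0 m = refl (Xt G z L k).
  by rewrite (fr_trunc z G0 Ln0 Lm) (_ : absz _ = k) //; lia.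
have -> : fr (trunc G (m + p%:Z)) z n0 (m + p%:Z) =
          refl (Xt G z (m + 1) p *m Xt G z L k).
  rewrite (fr_trunc z G0 Ln0); last by lia.
  by rewrite (_ : absz _ = k + p)%N ?Xt_add ?Lk //; lia.
have sumE : \sum_(s < p) `|G (m + s.+1%:Z)| =
            (\sum_(s < p) normc (G (m + 1 + s%:Z)))%:C.
  by rewrite sum_normcE; congr (_%:C); apply: eq_bigr => s _; congr (normc (G _)); lia.
have halfE : 1 / 2 = (1 / 2 : R)%:C by rewrite rmorphM rmorph1 fmorphV rmorph_nat.
rewrite sumE halfE lecR in small.
rewrite sumE normcE -rmorphM lecR.
exact: refl_Xt_mul_sub (su11_Xt L k G1 z1) small.
Qed.
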